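(* Every consistent piece-wise quadratic function $g:\mathbb{R}\to\mathbb{R}$ has a non-decreasing indexing function $I_g$.
   Context: A continuous $g$ is piece-wise quadratic with $N$ pieces if there exist $-\infty=\tau_0<\tau_1<\dots<\tau_N=+\infty$ and quadratic $p_1,\dots,p_N$ with $g=p_k$ on $[\tau_{k-1},\tau_k]$ and $p_k\ne p_{k+1}$ as functions; it is consistent if every $p_k$ is strongly convex and $g=\min_kp_k$ on $\mathbb{R}$. For such $g$ with strongly convex pieces, the indexing function is $I_g(\beta)=\min\{k:\ \exists\,\alpha^\star\in\arg\max_\alpha\{\beta\alpha-g(\alpha)\}\text{ with }\tau_{k-1}\le\alpha^\star\le\tau_k\}$. *)

From Stdlib Require Import Reals Lra Lia.
Open Scope R_scope.

Definition quad (a b c : R) (x : R) : R := a * x ^ 2 + b * x + c.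

(* Pieces are indexed k = 1..N; breakpoints tau 1, ..., tau (N-1) are finite,
   and tau_0 = -oo, tau_N = +oo are encoded by the conditions below. *)

Definition in_piece (N : nat) (tau : nat -> R) (k : nat) (x : R) : Prop :=
  (k = 1%nat \/ tau (k - 1)%nat <= x) /\ (k = N \/ x <= tau k).

Definition piecewise_quadratic (g : R -> R) (N : nat) (tau : nat -> R)
    (a b c : nat -> R) : Prop :=
  (1 <= N)%nat /\
  (forall x, continuity_pt g x) /\
  (forall k, (1 <= k)%nat -> (k + 1 < N)%nat -> tau k < tau (k + 1)%nat) /\
  (forall k x, (1 <= k <= N)%nat -> in_piece N tau k x ->
     g x = quad (a k) (b k) (c k) x) /\
  (forall k, (1 <= k)%nat -> (k < N)%nat ->
     exists x, quad (a k) (b k) (c k) x <> quad (a (k + 1)%nat) (b (k + 1)%nat) (c (k + 1)%nat) x).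

Definition consistent (g : R -> R) (N : nat) (a b c : nat -> R) : Prop :=
  (forall k, (1 <= k <= N)%nat -> 0 < a k) /\
  (forall x,
     (forall k, (1 <= k <= N)%nat -> g x <= quad (a k) (b k) (c k) x) /\
     (exists k, (1 <= k <= N)%nat /\ g x = quad (a k) (b k) (c k) x)).

Definition is_argmax (g : R -> R) (beta alpha : R) : Prop :=
  forall x, beta * x - g x <= beta * alpha - g alpha.

Definition index_set (g : R -> R) (N : nat) (tau : nat -> R) (beta : R) (k : nat) : Prop :=
  (1 <= k <= N)%nat /\ exists alpha, is_argmax g beta alpha /\ in_piece N tau k alpha.

Definition indexing (g : R -> R) (N : nat) (tau : nat -> R) (beta : R) (k : nat) : Prop :=
  index_set g N tau beta k /\ (forall j, index_set g N tau beta j -> (k <= j)%nat).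

(* The function beta x - g x is continuous and, because the two unbounded pieces are
   strongly convex, tends to -oo at both ends; so it attains its maximum and I_g is
   defined everywhere.  Adding the optimality inequalities of maximisers a1 at beta1 and
   a2 at beta2 gives (beta2 - beta1)(a2 - a1) >= 0, so maximisers move right as beta
   grows.  If I_g(beta1) = k1 > k2 = I_g(beta2), then a1 >= tau_(k1-1) >= tau_(k2-1) and
   a1 <= a2 <= tau_k2, so a1 also lies in piece k2, contradicting the minimality of k1. *)

From Stdlib Require Import Reals Lra Lia Psatz Classical Wf_nat.
Open Scope R_scope.

Lemma affine_le_quad_far (a p q : R) :
  0 < a -> exists M, forall x, M <= Rabs x -> p * x + q <= a * x ^ 2.
Proof.
  intros Ha.
  exists ((Rabs p + Rabs q) / a + 1); intros x Hx.
  pose proof (Rabs_pos p); pose proof (Rabs_pos q).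
  assert (HaM : Rabs p + Rabs q <= a * (Rabs x - 1)).
  { replace (Rabs p + Rabs q) with (a * ((Rabs p + Rabs q) / a)) by (field; lra).
    apply Rmult_le_compat_l; lra. }
  assert (Hpx : p * x <= Rabs p * Rabs x) by (rewrite <- Rabs_mult; apply Rle_abs).
  assert (Hq : q <= Rabs q) by apply Rle_abs.
  assert (H1 : 1 <= Rabs x) by nra.
  rewrite <- pow2_abs; nra.
Qed.

Lemma linear_sub_quad_le_far (a b c beta y : R) :
  0 < a -> exists M, forall x, M <= Rabs x -> beta * x - quad a b c x <= y.
Proof.
  intros Ha.
  destruct (affine_le_quad_far a (beta - b) (- c - y) Ha) as [M HM].
  exists M; intros x Hx; specialize (HM x Hx); unfold quad; lra.
Qed.

Lemma continuous_argmax_of_tails (h : R -> R) (L U x0 : R) :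
  (forall x, continuity_pt h x) -> L <= x0 <= U ->
  (forall x, x < L \/ U < x -> h x <= h x0) ->
  exists m, forall x, h x <= h m.
Proof.
  intros Hcont Hx0 Htails.
  destruct (continuity_ab_maj h L U ltac:(lra) (fun x _ => Hcont x)) as [m [Hm _]].
  exists m; intros x.
  destruct (Rle_dec L x), (Rle_dec x U);
    [now apply Hm | pose proof (Hm x0 Hx0); pose proof (Htails x ltac:(lra)); lra ..].
Qed.

Lemma in_piece_cover (N : nat) (tau : nat -> R) (x : R) :
  (1 <= N)%nat -> exists k, (1 <= k <= N)%nat /\ in_piece N tau k x.
Proof.
  intros HN.
  assert (Hfrom : forall m n, (n + m = N)%nat -> (1 <= n)%nat ->
            (n = 1%nat \/ tau (n - 1)%nat <= x) ->
            exists k, (1 <= k <= N)%nat /\ in_piece N tau k x).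
  { induction m as [|m IH]; intros n Hnm Hn Hlow.
    - exists n; split; [lia | split; [exact Hlow | left; lia]].
    - destruct (Rle_dec x (tau n)) as [Hle | Hgt].
      + exists n; split; [lia | split; [exact Hlow | now right]].
      + apply (IH (S n)); try lia.
        right; replace (S n - 1)%nat with n by lia; lra. }
  apply (Hfrom (N - 1)%nat 1%nat); lia.
Qed.

Section PiecewiseQuadratic.

Variables (g : R -> R) (N : nat) (tau : nat -> R) (a b c : nat -> R).
Hypothesis Hg : piecewise_quadratic g N tau a b c.

Lemma breakpoints_le (i j : nat) :
  (1 <= i)%nat -> (i <= j)%nat -> (j <= N - 1)%nat -> tau i <= tau j.
Proof.
  destruct Hg as [_ [_ [Hincr _]]].
  intros Hi Hij; induction Hij as [|j Hij IH]; intros Hj; [lra|].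
  replace (S j) with (j + 1)%nat by lia.
  pose proof (Hincr j ltac:(lia) ltac:(lia)); specialize (IH ltac:(lia)); lra.
Qed.

Lemma eq_last_piece_right :
  forall x, tau (N - 1)%nat <= x -> g x = quad (a N) (b N) (c N) x.
Proof.
  destruct Hg as [HN [_ [_ [Hpiece _]]]].
  intros x Hx; apply Hpiece; [lia|].
  split; [|now left].
  destruct (Nat.eq_dec N 1); [now left | now right].
Qed.

Lemma eq_first_piece_left :
  forall x, x <= tau 1%nat -> g x = quad (a 1%nat) (b 1%nat) (c 1%nat) x.
Proof.
  destruct Hg as [HN [_ [_ [Hpiece _]]]].
  intros x Hx; apply Hpiece; [lia|].
  split; [now left|].
  destruct (Nat.eq_dec 1 N); [now left | now right].
Qed.

Lemma argmax_exists (beta : R) :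
  0 < a 1%nat -> 0 < a N -> exists alpha, is_argmax g beta alpha.
Proof.
  intros Ha1 HaN.
  destruct Hg as [_ [Hcont _]].
  set (h x := beta * x - g x).
  destruct (linear_sub_quad_le_far _ (b 1%nat) (c 1%nat) beta (h 0) Ha1) as [Ml HMl].
  destruct (linear_sub_quad_le_far _ (b N) (c N) beta (h 0) HaN) as [Mr HMr].
  set (L := Rmin (- Rabs Ml) (tau 1%nat)).
  set (U := Rmax (Rabs Mr) (tau (N - 1)%nat)).
  assert (HL : L <= - Rabs Ml) by apply Rmin_l.
  assert (HLtau : L <= tau 1%nat) by apply Rmin_r.
  assert (HU : Rabs Mr <= U) by apply Rmax_l.
  assert (HUtau : tau (N - 1)%nat <= U) by apply Rmax_r.
  pose proof (Rle_abs Ml); pose proof (Rle_abs Mr); pose proof (Rabs_pos Ml); pose proof (Rabs_pos Mr).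
  apply (continuous_argmax_of_tails h L U 0); [| lra |].
  - intros x; apply continuity_pt_minus; [|apply Hcont].
    apply (continuity_pt_scal (fun x => x)), derivable_continuous_pt, derivable_pt_id.
  - intros x [Hx | Hx]; unfold h at 1.
    + rewrite eq_first_piece_left by lra.
      apply HMl; rewrite Rabs_left; lra.
    + rewrite eq_last_piece_right by lra.
      apply HMr; rewrite Rabs_right; lra.
Qed.

Lemma in_piece_of_lower_piece (k1 k2 : nat) (x1 x2 : R) :
  (1 <= k2)%nat -> (k2 < k1 <= N)%nat -> x1 <= x2 ->
  in_piece N tau k1 x1 -> in_piece N tau k2 x2 -> in_piece N tau k2 x1.
Proof.
  intros Hk2 Hk Hx [[? | Hlow1] _] [_ [? | Hup2]]; try lia.
  split; [|right; lra].
  destruct (Nat.eq_dec k2 1); [now left | right].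
  pose proof (breakpoints_le (k2 - 1) (k1 - 1) ltac:(lia) ltac:(lia) ltac:(lia)); lra.
Qed.

End PiecewiseQuadratic.

Lemma argmax_le (g : R -> R) (beta1 beta2 alpha1 alpha2 : R) :
  beta1 < beta2 -> is_argmax g beta1 alpha1 -> is_argmax g beta2 alpha2 -> alpha1 <= alpha2.
Proof.
  intros Hb H1 H2; specialize (H1 alpha2); specialize (H2 alpha1); nra.
Qed.

Lemma least_index_exists (P : nat -> Prop) :
  (exists n, P n) -> exists n, P n /\ forall m, P m -> (n <= m)%nat.
Proof.
  intros Hex.
  destruct (dec_inh_nat_subset_has_unique_least_element P (fun n => classic (P n)) Hex)
    as [n [Hn _]].
  now exists n.
Qed.

Theorem lemma5 (g : R -> R) (N : nat) (tau : nat -> R) (a b c : nat -> R) :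
  piecewise_quadratic g N tau a b c ->
  consistent g N a b c ->
  (forall beta, exists k, indexing g N tau beta k) /\
  (forall beta1 beta2 k1 k2, beta1 <= beta2 ->
     indexing g N tau beta1 k1 -> indexing g N tau beta2 k2 -> (k1 <= k2)%nat).
Proof.
  intros Hg [Hconvex _].
  pose proof Hg as [HN _].
  split.
  - intros beta.
    destruct (argmax_exists g N tau a b c Hg beta) as [alpha Halpha];
      [apply Hconvex; lia .. |].
    destruct (in_piece_cover N tau alpha HN) as [k [Hk Hpiece]].
    apply least_index_exists; exists k; split; [exact Hk | now exists alpha].
  - intros beta1 beta2 k1 k2 Hb [Hset1 Hmin1] [[Hk2 [al2 [Hmax2 Hpiece2]]] _].
    destruct (Nat.le_gt_cases k1 k2) as [Hle | Hlt]; [exact Hle|].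
    apply Hmin1; split; [exact Hk2|].
    destruct (Req_dec beta1 beta2) as [<- | Hne]; [now exists al2|].
    destruct Hset1 as [Hk1 [al1 [Hmax1 Hpiece1]]].
    exists al1; split; [exact Hmax1|].
    apply (in_piece_of_lower_piece g N tau a b c Hg k1 k2 al1 al2); try lia; try assumption.
    apply (argmax_le g beta1 beta2); [lra | assumption ..].
Qed.
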